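(* In the setting described in the context, the elementwise mean $\bar\sigma_h$ of the discrete Lagrange multiplier satisfies $\bar\sigma_h\le 0$ everywhere on $\Omega$, and $\bar\sigma_h=0$ on every $T\in\mathbb{N}_h$.
   Context: $\Omega\subset\mathbb{R}^d$ ($1\le d\le3$) is a bounded polyhedral domain, $f\in L^2(\Omega)$, and the obstacle $\chi\in C(\bar\Omega)\cap H^1(\Omega)$ satisfies $\chi\le 0$ on $\partial\Omega$. $\mathcal{T}_h$ is a conforming shape-regular triangulation of $\Omega$ into closed triangles; $|T|$ is the area of $T$; $\mathcal{M}_h$ is the set of all edge midpoints, $\mathcal{M}_h^i$ the set of midpoints of interior edges, $\mathcal{V}_h^i$ the set of interior vertices, $\mathcal{M}_T$ the set of the three edge midpoints of $T$. $V_h=\{v\in H^1_0(\Omega): v|_T\in\mathbb{P}_2(T)\ \forall T\}$ with nodal basis $\{\psi_z: z\in\mathcal{V}_h^i\cup\mathcal{M}_h^i\}$. $V_{nc}$ is the Crouzeix–Raviart space (piecewise affine functions continuous at interior edge midpoints and vanishing at boundary edge midpoints). For $v\in V_{nc}$, $\Pi_hv:=\sum_{z\in\mathcal{M}_h^i}v(z)\psi_z$. Let $a(v,w)=(\nabla v,\nabla w)$. Let $\mathcal{K}_h=\{v_h\in V_h: v_h(z)\ge\chi(z)\ \forall z\in\mathcal{M}_h\}$ and $u_h\in\mathcal{K}_h$ the solution of $a(u_h,v_h-u_h)\ge(f,v_h-u_h)$ for all $v_h\in\mathcal{K}_h$. With $\langle w,v\rangle_h=\sum_{T}\frac{|T|}{3}\sum_{z\in\mathcal{M}_T}w(z)v(z)$,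 $\sigma_h\in V_{nc}$ is defined by $\langle\sigma_h,v_h\rangle_h=(f,\Pi_hv_h)-a(u_h,\Pi_hv_h)$ for all $v_h\in V_{nc}$. For $v\in L^2(\Omega)$, $\bar v$ is the piecewise constant function with $\bar v|_T=\frac1{|T|}\int_Tv\,dx$. $\mathbb{N}_h=\{T\in\mathcal{T}_h: u_h(z)>\chi(z)\ \forall z\in\mathcal{M}_T\}$. *)

From HB Require Import structures.
From mathcomp Require Import all_boot all_order all_algebra.
From mathcomp Require Import all_classical all_reals all_analysis.
Set Implicit Arguments.
Unset Strict Implicit.
Unset Printing Implicit Defensive.
Import Order.TTheory GRing.Theory Num.Theory.
Import numFieldNormedType.Exports.
Local Open Scope classical_set_scope.
Local Open Scope ring_scope.

Section P2FEM.
Variable R : realType.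

Definition pt := (R * R)%type.
Definition tri := (pt * pt * pt)%type.

Definition tv1 (T : tri) : pt := T.1.1.
Definition tv2 (T : tri) : pt := T.1.2.
Definition tv3 (T : tri) : pt := T.2.
Definition vertices (T : tri) : seq pt := [:: tv1 T; tv2 T; tv3 T].

(** twice the signed area *)
Definition det2 (a b c : pt) : R :=
  (b.1 - a.1) * (c.2 - a.2) - (b.2 - a.2) * (c.1 - a.1).
Definition nondegenerate (T : tri) : Prop := det2 (tv1 T) (tv2 T) (tv3 T) != 0.
Definition area (T : tri) : R := `|det2 (tv1 T) (tv2 T) (tv3 T)| / 2.

Definition tri_set (T : tri) : set pt :=
  [set x | exists l1 l2 l3 : R, [/\ 0 <= l1, 0 <= l2, 0 <= l3, l1 + l2 + l3 = 1 &
     x = (l1 * (tv1 T).1 + l2 * (tv2 T).1 + l3 * (tv3 T).1,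
          l1 * (tv1 T).2 + l2 * (tv2 T).2 + l3 * (tv3 T).2)]].

Definition segment (a b : pt) : set pt :=
  [set x | exists l : R, [/\ 0 <= l, l <= 1 &
     x = ((1 - l) * a.1 + l * b.1, (1 - l) * a.2 + l * b.2)]].

Definition midpt (a b : pt) : pt := ((a.1 + b.1) / 2, (a.2 + b.2) / 2).
Definition midpoints (T : tri) : seq pt :=
  [:: midpt (tv2 T) (tv3 T); midpt (tv3 T) (tv1 T); midpt (tv1 T) (tv2 T)].

Definition conforming (Om : set pt) (n : nat) (Th : 'I_n -> tri) : Prop :=
  [/\ forall i, nondegenerate (Th i),
      closure Om = \bigcup_i tri_set (Th i) &
      forall i j, i != j ->
        let S := tri_set (Th i) `&` tri_set (Th j) in
        [\/ S = set0,
            (exists v, [/\ v \in vertices (Th i), v \in vertices (Th j) & S = [set v]])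
          | (exists v w, [/\ v != w, (v \in vertices (Th i)) && (w \in vertices (Th i)),
                            (v \in vertices (Th j)) && (w \in vertices (Th j)) &
                            S = segment v w])]].

(** bounded polygonal domain: open and connected (boundedness and the polygonal
    boundary follow from [conforming]) *)
Definition domain (Om : set pt) : Prop := open Om /\ connected Om.

Definition Mh n (Th : 'I_n -> tri) : set pt := [set z | exists i, z \in midpoints (Th i)].
Definition Mhi (Om : set pt) n (Th : 'I_n -> tri) : set pt := Mh Th `&` Om.
Definition Vhi (Om : set pt) n (Th : 'I_n -> tri) : set pt :=
  [set z | exists i, z \in vertices (Th i)] `&` Om.
Definition node (Om : set pt) n (Th : 'I_n -> tri) : set pt := Vhi Om Th `|` Mhi Om Th.

Definition Mhi_list (Om : set pt) n (Th : 'I_n -> tri) : seq pt :=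
  [seq z <- undup (flatten [seq midpoints (Th i) | i <- enum 'I_n]) | `[< Om z >]].

Definition isP2 (p : pt -> R) : Prop :=
  exists c0 c1 c2 c3 c4 c5 : R, forall x : pt,
    p x = c0 + c1 * x.1 + c2 * x.2 + c3 * x.1 ^+ 2 + c4 * (x.1 * x.2) + c5 * x.2 ^+ 2.
Definition isP1 (p : pt -> R) : Prop :=
  exists c0 c1 c2 : R, forall x : pt, p x = c0 + c1 * x.1 + c2 * x.2.

(** V_h : continuous piecewise P2 functions vanishing on the boundary; elements
    are represented by their extension by zero outside Om. *)
Definition Vh (Om : set pt) n (Th : 'I_n -> tri) (v : pt -> R) : Prop :=
  [/\ continuous v,
      forall i, exists p, isP2 p /\ {in tri_set (Th i), v =1 p} &
      forall x, ~ Om x -> v x = 0].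

(** V_nc : Crouzeix-Raviart functions, represented by their affine pieces *)
Definition Vnc (Om : set pt) n (Th : 'I_n -> tri) (w : 'I_n -> pt -> R) : Prop :=
  [/\ forall i, isP1 (w i),
      forall i j z, z \in midpoints (Th i) -> z \in midpoints (Th j) -> Om z ->
        w i z = w j z &
      forall i z, z \in midpoints (Th i) -> ~ Om z -> w i z = 0].

Definition ncval n (Th : 'I_n -> tri) (w : 'I_n -> pt -> R) (z : pt) : R :=
  if [pick i | z \in midpoints (Th i)] is Some i then w i z else 0.

Definition Pih (Om : set pt) n (Th : 'I_n -> tri) (psi : pt -> pt -> R)
  (w : 'I_n -> pt -> R) : pt -> R :=
  fun x => \sum_(z <- Mhi_list Om Th) ncval Th w z * psi z x.

Definition ip_h n (Th : 'I_n -> tri) (w v : 'I_n -> pt -> R) : R :=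
  \sum_(i < n) area (Th i) / 3 * \sum_(z <- midpoints (Th i)) w i z * v i z.

Definition leb2 := ((@lebesgue_measure R) \x (@lebesgue_measure R))%E.

Definition pdx (g : pt -> R) : pt -> R := fun x => derive1 (fun t => g (t, x.2)) x.1.
Definition pdy (g : pt -> R) : pt -> R := fun x => derive1 (fun t => g (x.1, t)) x.2.
Definition pd (b : bool) (g : pt -> R) : pt -> R := if b then pdx g else pdy g.
Definition iter_pd (s : seq bool) (g : pt -> R) : pt -> R := foldr pd g s.

Definition a_form (Om : set pt) (v w : pt -> R) : R :=
  \int[leb2]_(x in Om) (pdx v x * pdx w x + pdy v x * pdy w x).
Definition l2ip (Om : set pt) (g v : pt -> R) : R :=
  \int[leb2]_(x in Om) (g x * v x).

Definition L2 (Om : set pt) (g : pt -> R) : Prop :=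
  measurable_fun Om g /\ leb2.-integrable Om (fun x => ((g x) ^+ 2)%:E).

Definition smooth (g : pt -> R) : Prop :=
  forall s : seq bool, continuous (iter_pd s g) /\
    forall x : pt, derivable (fun t => iter_pd s g (t, x.2)) x.1 1 /\
                   derivable (fun t => iter_pd s g (x.1, t)) x.2 1.
Definition test_fun (Om : set pt) (phi : pt -> R) : Prop :=
  smooth phi /\ exists K : set pt, [/\ compact K, K `<=` Om & forall x, ~ K x -> phi x = 0].

Definition H1 (Om : set pt) (g : pt -> R) : Prop :=
  L2 Om g /\ exists g1 g2 : pt -> R, [/\ L2 Om g1, L2 Om g2 &
    forall phi, test_fun Om phi ->
      l2ip Om g (pdx phi) = - l2ip Om g1 phi /\ l2ip Om g (pdy phi) = - l2ip Om g2 phi].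

Definition Kh (Om : set pt) n (Th : 'I_n -> tri) (chi : pt -> R) (v : pt -> R) : Prop :=
  Vh Om Th v /\ forall z, Mh Th z -> chi z <= v z.

Definition elem_mean n (Th : 'I_n -> tri) (w : 'I_n -> pt -> R) (i : 'I_n) : R :=
  (area (Th i))^-1 * \int[leb2]_(x in tri_set (Th i)) w i x.

Definition inNh n (Th : 'I_n -> tri) (u chi : pt -> R) (i : 'I_n) : Prop :=
  forall z, z \in midpoints (Th i) -> chi z < u z.

End P2FEM.

From Pilot Require Import Defs.
From HB Require Import structures.
From mathcomp Require Import all_boot all_order all_algebra.
From mathcomp Require Import all_classical all_reals all_analysis.
From mathcomp Require Import lra ring measurable_realfun.
Import Order.TTheory GRing.Theory Num.Theory.
Import numFieldNormedType.Exports.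
Local Open Scope classical_set_scope.
Local Open Scope ring_scope.

Set Implicit Arguments.
Unset Strict Implicit.
Unset Printing Implicit Defensive.

(* At an interior edge midpoint z of T_i, test the definition of sigma_h with
   c times the Crouzeix-Raviart basis function phi_z: Pi_h maps it to c psi_z,
   and u_h + c psi_z is admissible in the variational inequality as soon as
   chi(z) <= u_h(z) + c.  This gives c sigma_h(z) m_z <= 0, where m_z > 0 is the
   lumped mass of z; c = 1 yields sigma_h(z) <= 0, and c = chi(z) - u_h(z) < 0
   yields sigma_h(z) = 0 when z is not a contact point (at boundary midpoints
   sigma_h vanishes by definition of V_nc).
   An affine function on T is the combination of its midpoint values with the
   shape functions 1 - 2 lambda_k (lambda_k the barycentric coordinates), so it
   remains to see that each of these has a nonnegative integral over T: the
   central symmetry exchanging the vertex k with the midpoint of the opposite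
   edge maps lambda_k to 1 - lambda_k, hence carries the part of T where
   1 - 2 lambda_k < 0 into the part where it is >= 0 and flips its sign. *)

Section CentralSymmetry.
Variable R : realType.
Local Notation leb := (@lebesgue_measure R).
Local Notation P := (measurableTypeR R * measurableTypeR R)%type.

Lemma measurable_preimageT d d' (T : measurableType d) (U : measurableType d')
    (f : T -> U) (B : set U) :
  measurable_fun setT f -> measurable B -> measurable (f @^-1` B).
Proof. by move=> mf mB; rewrite -[_ @^-1` _]setTI; exact: mf. Qed.

Lemma lebesgue_measure_reflect (a : R) (A : set R) : measurable A ->
  pushforward leb ((fun x : R => a - x) : _ -> measurableTypeR R) A = leb A.
Proof.
move=> mA; apply/esym/lebesgue_measure_unique => //; first exact: measurable_funB.
move=> mf X [[b c]] _ <-.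
change (leb `]b, c]%classic = leb ((fun x : R => a - x) @^-1` `]b, c]%classic)).
have -> : (fun x : R => a - x) @^-1` `]b, c]%classic = `[a - c, a - b[%classic.
  by apply/seteqP; split => x /=; rewrite !in_itv /= => /andP[? ?]; apply/andP; split; lra.
rewrite !lebesgue_measure_itv /= !lte_fin.
have [bc|cb] := ltP b c; first by rewrite ifT; [congr (_%:E); lra | lra].
by rewrite ifF //; apply/negbTE; rewrite -leNgt; lra.
Qed.

Definition central_sym (p x : P) : P := (p.1 - x.1, p.2 - x.2).

Lemma measurable_central_sym p : measurable_fun setT (central_sym p).
Proof.
apply: measurable_fun_pair.
  by apply: measurable_funB => //; exact: measurable_fst.
by apply: measurable_funB => //; exact: measurable_snd.
Qed.

Lemma leb2_central_sym p (X : set P) : measurable X ->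
  pushforward (@leb2 R) (central_sym p) X = leb2 X.
Proof.
move=> mX; apply/esym/product_measure_unique => //; first exact: measurable_central_sym.
move=> mf A B mA mB.
change ((leb \x leb)%E (central_sym p @^-1` (A `*` B)) = (leb A * leb B)%E).
have -> : central_sym p @^-1` (A `*` B) =
    ((fun x : R => p.1 - x) @^-1` A) `*` ((fun x : R => p.2 - x) @^-1` B).
  by apply/seteqP; split => -[x y].
rewrite product_measure1E; last 2 first.
- by apply: measurable_preimageT => //; exact: measurable_funB.
- by apply: measurable_preimageT => //; exact: measurable_funB.
by rewrite -(lebesgue_measure_reflect p.1 mA) -(lebesgue_measure_reflect p.2 mB).
Qed.

Lemma Rintegral_central_sym p (D : set P) (f : P -> R) : measurable D ->
  measurable_fun setT f ->
  (@leb2 R).-integrable (central_sym p @^-1` D) (EFin \o (f \o central_sym p)) ->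
  Rintegral (@leb2 R) D f = Rintegral (@leb2 R) (central_sym p @^-1` D) (f \o central_sym p).
Proof.
move=> mD mf intf; rewrite /Rintegral; congr fine.
have mfE : measurable_fun setT (EFin \o f) by exact/measurable_EFinP.
rewrite -(@integral_pushforward _ _ _ _ R _ (measurable_central_sym p) _ D _ mfE intf mD).
apply: eq_measure_integral; first exact: measurable_central_sym.
move=> ? B mB _.
change (leb2 B = pushforward (@leb2 R) (central_sym p) B).
by rewrite leb2_central_sym.
Qed.

End CentralSymmetry.

Section Barycentric.
Variable R : realType.
Implicit Types (T : tri R) (x : pt R).

Definition tri_det T := det2 (tv1 T) (tv2 T) (tv3 T).
Definition bary1 T x := det2 x (tv2 T) (tv3 T) / tri_det T.
Definition bary2 T x := det2 (tv1 T) x (tv3 T) / tri_det T.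
Definition bary3 T x := det2 (tv1 T) (tv2 T) x / tri_det T.

Lemma bary_sum T x : Defs.nondegenerate T -> bary1 T x + bary2 T x + bary3 T x = 1.
Proof.
rewrite /Defs.nondegenerate /bary1 /bary2 /bary3 /tri_det.
case: T => [[[a1 a2] [b1 b2]] [c1 c2]]; case: x => x1 x2.
by rewrite /det2 /tv1 /tv2 /tv3 /= => nd; field.
Qed.

Lemma bary_combE T x : Defs.nondegenerate T ->
  x = (bary1 T x * (tv1 T).1 + bary2 T x * (tv2 T).1 + bary3 T x * (tv3 T).1,
       bary1 T x * (tv1 T).2 + bary2 T x * (tv2 T).2 + bary3 T x * (tv3 T).2).
Proof.
rewrite /Defs.nondegenerate /bary1 /bary2 /bary3 /tri_det.
case: T => [[[a1 a2] [b1 b2]] [c1 c2]]; case: x => x1 x2.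
by rewrite /det2 /tv1 /tv2 /tv3 /= => nd; congr pair; field.
Qed.

Lemma bary_of_comb T (l1 l2 l3 : R) : Defs.nondegenerate T -> l1 + l2 + l3 = 1 ->
  let x := (l1 * (tv1 T).1 + l2 * (tv2 T).1 + l3 * (tv3 T).1,
            l1 * (tv1 T).2 + l2 * (tv2 T).2 + l3 * (tv3 T).2) in
  [/\ bary1 T x = l1, bary2 T x = l2 & bary3 T x = l3].
Proof.
rewrite /Defs.nondegenerate /bary1 /bary2 /bary3 /tri_det => + s.
have -> : l3 = 1 - l1 - l2 by rewrite -s; ring.
case: T => [[[a1 a2] [b1 b2]] [c1 c2]].
by rewrite /det2 /tv1 /tv2 /tv3 /= => nd; split; field.
Qed.

Lemma tri_setE T x : Defs.nondegenerate T ->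
  tri_set T x <-> [/\ 0 <= bary1 T x, 0 <= bary2 T x & 0 <= bary3 T x].
Proof.
move=> nd; split.
  by case=> l1 [l2 [l3 [h1 h2 h3 s ->]]]; have [-> -> ->] := bary_of_comb nd s.
case=> h1 h2 h3; exists (bary1 T x), (bary2 T x), (bary3 T x); split => //.
  exact: bary_sum.
exact: bary_combE.
Qed.

Definition rot_tri T : tri R := ((tv2 T, tv3 T), tv1 T).

Lemma tri_det_rot T : tri_det (rot_tri T) = tri_det T.
Proof. by rewrite /tri_det /det2 /rot_tri /tv1 /tv2 /tv3 /=; ring. Qed.

Lemma nondegenerate_rot T : Defs.nondegenerate T -> Defs.nondegenerate (rot_tri T).
Proof.
move=> nd; rewrite /Defs.nondegenerate -[det2 _ _ _]/(tri_det (rot_tri T)) tri_det_rot.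
exact: nd.
Qed.

Lemma tri_set_rot T : tri_set (rot_tri T) = tri_set T.
Proof.
apply/seteqP; split => x [l1 [l2 [l3 [h1 h2 h3 s ->]]]].
  exists l3, l1, l2; split => //; first by rewrite -s; ring.
  by rewrite /rot_tri /tv1 /tv2 /tv3 /=; congr pair; ring.
exists l2, l3, l1; split => //; first by rewrite -s; ring.
by rewrite /rot_tri /tv1 /tv2 /tv3 /=; congr pair; ring.
Qed.

Lemma bary1_rot T : bary1 (rot_tri T) = bary2 T.
Proof.
apply/funext => x; rewrite /bary1 /bary2 tri_det_rot; congr (_ / _).
by rewrite /det2 /rot_tri /tv1 /tv2 /tv3 /=; ring.
Qed.

Lemma bary2_rot T : bary2 (rot_tri T) = bary3 T.
Proof.
apply/funext => x; rewrite /bary2 /bary3 tri_det_rot; congr (_ / _).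
by rewrite /det2 /rot_tri /tv1 /tv2 /tv3 /=; ring.
Qed.

End Barycentric.

Section Affine.
Variable R : realType.
Local Notation P := (measurableTypeR R * measurableTypeR R)%type.
Implicit Types (T : tri R) (h : pt R -> R).

Lemma isP1_cst (k : R) : isP1 (fun _ : pt R => k).
Proof. by exists k, 0, 0 => x; ring. Qed.

Lemma isP1_fst : isP1 (fun x : pt R => x.1).
Proof. by exists 0, 1, 0 => x; ring. Qed.

Lemma isP1_snd : isP1 (fun x : pt R => x.2).
Proof. by exists 0, 0, 1 => x; ring. Qed.

Lemma isP1_add g h : isP1 g -> isP1 h -> isP1 (fun x => g x + h x).
Proof.
case=> a0 [a1 [a2 ea]] [b0 [b1 [b2 eb]]].
by exists (a0 + b0), (a1 + b1), (a2 + b2) => x; rewrite ea eb; ring.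
Qed.

Lemma isP1_scale (k : R) h : isP1 h -> isP1 (fun x => k * h x).
Proof.
case=> a0 [a1 [a2 e]].
by exists (k * a0), (k * a1), (k * a2) => x; rewrite e; ring.
Qed.

Lemma isP1_bary1 T : isP1 (bary1 T).
Proof.
exists (((tv2 T).1 * (tv3 T).2 - (tv2 T).2 * (tv3 T).1) / tri_det T),
  (((tv2 T).2 - (tv3 T).2) / tri_det T), (((tv3 T).1 - (tv2 T).1) / tri_det T).
by move=> x; rewrite /bary1 /det2; ring.
Qed.

Lemma isP1_bary2 T : isP1 (bary2 T).
Proof.
exists (((tv1 T).2 * (tv3 T).1 - (tv1 T).1 * (tv3 T).2) / tri_det T),
  (((tv3 T).2 - (tv1 T).2) / tri_det T), (((tv1 T).1 - (tv3 T).1) / tri_det T).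
by move=> x; rewrite /bary2 /det2; ring.
Qed.

Lemma isP1_bary3 T : isP1 (bary3 T).
Proof.
exists (((tv1 T).1 * (tv2 T).2 - (tv1 T).2 * (tv2 T).1) / tri_det T),
  (((tv1 T).2 - (tv2 T).2) / tri_det T), (((tv2 T).1 - (tv1 T).1) / tri_det T).
by move=> x; rewrite /bary3 /det2; ring.
Qed.

Lemma isP1_measurable h : isP1 h -> measurable_fun [set: P] h.
Proof.
case=> a0 [a1 [a2 e]].
have -> : h = (fun x => a0 + a1 * x.1 + a2 * x.2) by apply/funext => x; exact: e.
apply: measurable_funD; [apply: measurable_funD|].
- exact: measurable_cst.
- by apply: measurable_funM; [exact: measurable_cst | exact: measurable_fst].
- by apply: measurable_funM; [exact: measurable_cst | exact: measurable_snd].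
Qed.

Lemma isP1_convex_comb h (a b c : pt R) (l1 l2 l3 : R) : isP1 h -> l1 + l2 + l3 = 1 ->
  h (l1 * a.1 + l2 * b.1 + l3 * c.1, l1 * a.2 + l2 * b.2 + l3 * c.2) =
  l1 * h a + l2 * h b + l3 * h c.
Proof.
case=> a0 [a1 [a2 e]] s; rewrite !e /=.
have -> : l3 = 1 - l1 - l2 by rewrite -s; ring.
ring.
Qed.

Lemma isP1_tri_bound T h x : isP1 h -> tri_set T x ->
  `|h x| <= `|h (tv1 T)| + `|h (tv2 T)| + `|h (tv3 T)|.
Proof.
move=> hP [l1 [l2 [l3 [h1 h2 h3 s ->]]]]; rewrite (isP1_convex_comb _ _ _ hP s).
have term k v : 0 <= k -> k <= 1 -> `|k * v| <= `|v|.
  by move=> k0 k1; rewrite normrM ger0_norm // ler_piMl.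
apply: (le_trans (ler_normD _ _)); apply: lerD; last by apply: term; lra.
by apply: (le_trans (ler_normD _ _)); apply: lerD; apply: term; lra.
Qed.

Lemma measurable_tri_set T : Defs.nondegenerate T -> measurable (tri_set T : set P).
Proof.
move=> nd.
have -> : (tri_set T : set P) =
    bary1 T @^-1` `[0, +oo[ `&` bary2 T @^-1` `[0, +oo[ `&` bary3 T @^-1` `[0, +oo[.
  apply/seteqP; split => x; rewrite /= !in_itv /= !andbT.
    by move/(tri_setE x nd) => [].
  by move=> [[h1 h2] h3]; apply/(tri_setE x nd).
by apply: measurableI; [apply: measurableI|]; apply: measurable_preimageT => //;
  apply: isP1_measurable; [exact: isP1_bary1 | exact: isP1_bary2 | exact: isP1_bary3].
Qed.

Lemma leb2_tri_set_lty T : Defs.nondegenerate T -> (@leb2 R (tri_set T : set P) < +oo)%E.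
Proof.
move=> nd.
set Kx := `|(tv1 T).1| + `|(tv2 T).1| + `|(tv3 T).1|.
set Ky := `|(tv1 T).2| + `|(tv2 T).2| + `|(tv3 T).2|.
have sub : (tri_set T : set P) `<=` `[- Kx, Kx] `*` `[- Ky, Ky].
  move=> x Tx; split => /=; rewrite in_itv /= -ler_norml.
    exact: (isP1_tri_bound isP1_fst Tx).
  exact: (isP1_tri_bound isP1_snd Tx).
apply: (@le_lt_trans _ _ (@leb2 R (`[- Kx, Kx] `*` `[- Ky, Ky]))).
  apply: le_measure => //; rewrite inE; first exact: measurable_tri_set.
  by apply: measurableX; exact: measurable_itv.
rewrite /leb2 product_measure1E; try exact: measurable_itv.
change (@lebesgue_measure R `[(- Kx)%R, Kx] * @lebesgue_measure R `[(- Ky)%R, Ky] < +oo)%E.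
rewrite !lebesgue_measure_itv /=.
by case: ifP => _; case: ifP => _; rewrite ?mul0e ?mule0 -?EFinM ?ltry.
Qed.

Lemma isP1_integrable_tri T h (S : set P) : Defs.nondegenerate T -> isP1 h ->
  measurable S -> S `<=` tri_set T -> (@leb2 R).-integrable S (EFin \o h).
Proof.
move=> nd hP mS sub.
have mT := measurable_tri_set nd.
have mh : measurable_fun (tri_set T) (EFin \o h).
  by apply/measurable_EFinP; apply: measurable_funS (isP1_measurable hP).
apply: (integrableS mT) => //; apply/integrableP; split => //.
set M := `|h (tv1 T)| + `|h (tv2 T)| + `|h (tv3 T)|.
have M0 : 0 <= M by rewrite /M !addr_ge0.
apply: (@le_lt_trans _ _ (M%:E * @leb2 R (tri_set T : set P))%E).
  apply: integral_le_bound => //.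
  by apply: aeW => x Tx /=; rewrite lee_fin; exact: isP1_tri_bound.
by apply: lte_mul_pinfty => //; exact: leb2_tri_set_lty.
Qed.

End Affine.

Definition cr_shape (R : realType) (l : pt R -> R) (x : pt R) : R := 1 - 2 * l x.

Lemma isP1_cr_shape (R : realType) (l : pt R -> R) : isP1 l -> isP1 (cr_shape l).
Proof.
case=> a0 [a1 [a2 e]].
by exists (1 - 2 * a0), (- 2 * a1), (- 2 * a2) => x; rewrite /cr_shape e; ring.
Qed.

(* The central symmetry [central_sym (mirror1 T)] exchanges [tv1 T] with the
   midpoint of the opposite edge. *)
Definition mirror1 (R : realType) (T : tri R) : pt R :=
  ((2 * (tv1 T).1 + (tv2 T).1 + (tv3 T).1) / 2, (2 * (tv1 T).2 + (tv2 T).2 + (tv3 T).2) / 2).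

Lemma bary_mirror1 (R : realType) (T : tri R) (x : pt R) : Defs.nondegenerate T ->
  let y := central_sym (mirror1 T) x in
  [/\ bary1 T y = 1 - bary1 T x, bary2 T y = 1/2 - bary2 T x & bary3 T y = 1/2 - bary3 T x].
Proof.
rewrite /Defs.nondegenerate /bary1 /bary2 /bary3 /tri_det /mirror1 /central_sym.
case: T => [[[a1 a2] [b1 b2]] [c1 c2]]; case: x => x1 x2.
by rewrite /det2 /tv1 /tv2 /tv3 /= => nd; split; field.
Qed.

Section CRShapeIntegral.
Variables (R : realType) (T : tri R).
Hypothesis nd : Defs.nondegenerate T.
Local Notation P := (measurableTypeR R * measurableTypeR R)%type.
Local Notation phi := (cr_shape (bary1 T)).
Local Notation Rint := (Rintegral (@leb2 R)).

Let S : set P := tri_set T.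
Let E : set P := S `&` bary1 T @^-1` `]-oo, 1/2].
Let C : set P := S `&` bary1 T @^-1` `]1/2, +oo[.
Let B : set P := central_sym (mirror1 T) @^-1` C.

Let mS : measurable S. Proof. exact: measurable_tri_set. Qed.

Let mbary1 : measurable_fun setT (bary1 T : P -> R).
Proof. by apply: isP1_measurable; exact: isP1_bary1. Qed.

Let mE : measurable E. Proof. by apply: measurableI => //; exact: measurable_preimageT. Qed.
Let mC : measurable C. Proof. by apply: measurableI => //; exact: measurable_preimageT. Qed.

Let mB : measurable B.
Proof. by apply: measurable_preimageT => //; exact: measurable_central_sym. Qed.

Let isP1_phi : isP1 phi. Proof. by apply: isP1_cr_shape; exact: isP1_bary1. Qed.

Let integrable_phi (U : set P) : measurable U -> U `<=` S ->
  (@leb2 R).-integrable U (EFin \o phi).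
Proof. by move=> mU US; exact: (isP1_integrable_tri nd). Qed.

Lemma central_sym_mirror1_sub : B `<=` E.
Proof.
move=> x [/(tri_setE _ nd) [h1 h2 h3]]; rewrite /= in_itv /= andbT => h4.
have [e1 e2 e3] := bary_mirror1 x nd.
have s := bary_sum x nd.
rewrite {}e1 {}e2 {}e3 in h1 h2 h3 h4.
split; last by rewrite /= in_itv /=; lra.
by apply/(tri_setE _ nd); split; lra.
Qed.

Lemma Rintegral_cr_shape1_mirror : Rint C phi = - Rint B phi.
Proof.
have phi_sym (x : P) : phi (central_sym (mirror1 T) x) = -1 * phi x.
  by have [e1 _ _] := bary_mirror1 x nd; rewrite /cr_shape e1; ring.
have BS : B `<=` S by move=> x /central_sym_mirror1_sub [].
rewrite (@Rintegral_central_sym _ (mirror1 T)) //; last 2 first.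
- exact: isP1_measurable.
- apply: (eq_integrable mB (EFin \o (fun x => -1 * phi x))).
    by move=> x _ /=; rewrite phi_sym.
  by apply: (isP1_integrable_tri nd) => //; exact: isP1_scale.
have -> : Rint B (phi \o central_sym (mirror1 T)) = Rint B (fun x => -1 * phi x).
  by apply: eq_Rintegral => x _; exact: phi_sym.
by rewrite RintegralZl ?mulN1r //; exact: integrable_phi.
Qed.

Lemma Rintegral_cr_shape1_ge0 : 0 <= Rint S phi.
Proof.
have SE : S = E `|` C.
  apply/seteqP; split => [x Sx|x [] []//].
  by rewrite /E /C /= !in_itv /=; case: (leP (bary1 T x) (1/2)) => h; [left|right].
have EB : E = B `|` (E `\` B).
  apply/seteqP; split => [x Ex|x [/central_sym_mirror1_sub|[]]//].
  by case: (pselect (B x)) => h; [left|right].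
have dEC : [disjoint E & C].
  apply/disj_setPS => x [[_ h1] [_ h2]]; move: h1 h2.
  by rewrite /= !in_itv /= andbT leNgt => /negP.
have dB : [disjoint B & E `\` B] by apply/disj_setPS => x [? []].
rewrite SE Rintegral_setU //; last by rewrite -SE; apply: integrable_phi.
rewrite Rintegral_cr_shape1_mirror EB Rintegral_setU //; last 2 first.
- exact: measurableD.
- by rewrite -EB; apply: integrable_phi => // x [].
rewrite addrAC subrr add0r; apply: Rintegral_ge0 => x [[_]].
by rewrite /= in_itv /= /cr_shape => ? _; lra.
Qed.

End CRShapeIntegral.

Section AffineIntegral.
Variable R : realType.
Local Notation P := (measurableTypeR R * measurableTypeR R)%type.
Local Notation Rint := (Rintegral (@leb2 R)).
Implicit Types (T : tri R) (w : pt R -> R).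

Lemma Rintegral_cr_shape2_ge0 T : Defs.nondegenerate T ->
  0 <= Rint (tri_set T : set P) (cr_shape (bary2 T)).
Proof.
move=> nd; have := Rintegral_cr_shape1_ge0 (nondegenerate_rot nd).
by rewrite tri_set_rot bary1_rot.
Qed.

Lemma Rintegral_cr_shape3_ge0 T : Defs.nondegenerate T ->
  0 <= Rint (tri_set T : set P) (cr_shape (bary3 T)).
Proof.
move=> nd; have := Rintegral_cr_shape1_ge0 (nondegenerate_rot (nondegenerate_rot nd)).
by rewrite !tri_set_rot bary1_rot bary2_rot.
Qed.

Lemma isP1_cr_interp T w x : Defs.nondegenerate T -> isP1 w ->
  w x = w (midpt (tv2 T) (tv3 T)) * cr_shape (bary1 T) x
      + w (midpt (tv3 T) (tv1 T)) * cr_shape (bary2 T) x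
      + w (midpt (tv1 T) (tv2 T)) * cr_shape (bary3 T) x.
Proof.
move=> + [c0 [c1 [c2 e]]]; rewrite !e.
rewrite /Defs.nondegenerate /cr_shape /bary1 /bary2 /bary3 /tri_det /midpt.
case: T => [[[a1 a2] [b1 b2]] [d1 d2]]; case: x => x1 x2.
by rewrite /det2 /tv1 /tv2 /tv3 /= => nd; field.
Qed.

Lemma Rintegral_isP1_tri T w : Defs.nondegenerate T -> isP1 w ->
  Rint (tri_set T : set P) w =
    w (midpt (tv2 T) (tv3 T)) * Rint (tri_set T : set P) (cr_shape (bary1 T))
  + w (midpt (tv3 T) (tv1 T)) * Rint (tri_set T : set P) (cr_shape (bary2 T))
  + w (midpt (tv1 T) (tv2 T)) * Rint (tri_set T : set P) (cr_shape (bary3 T)).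
Proof.
move=> nd wP.
have int (h : pt R -> R) : isP1 h -> (@leb2 R).-integrable (tri_set T : set P) (EFin \o h).
  by move=> hP; apply: (isP1_integrable_tri nd) => //; exact: measurable_tri_set.
have P1 := isP1_cr_shape (isP1_bary1 T).
have P2 := isP1_cr_shape (isP1_bary2 T).
have P3 := isP1_cr_shape (isP1_bary3 T).
under eq_Rintegral => x _ do rewrite (isP1_cr_interp x nd wP).
have mT := measurable_tri_set nd.
rewrite RintegralD //; first rewrite RintegralD //; first rewrite !RintegralZl //.
all: by apply: int; do ?[assumption | apply: isP1_add | apply: isP1_scale].
Qed.

Lemma Rintegral_isP1_tri_le0 T w : Defs.nondegenerate T -> isP1 w ->
  (forall m, m \in midpoints T -> w m <= 0) -> Rint (tri_set T : set P) w <= 0.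
Proof.
move=> nd wP w_le0; rewrite Rintegral_isP1_tri //.
have mid_le0 m r : m \in midpoints T -> 0 <= r -> w m * r <= 0.
  by move=> mT r0; rewrite mulr_le0_ge0 // w_le0.
rewrite -oppr_ge0 !opprD; (apply: addr_ge0; first apply: addr_ge0); rewrite oppr_ge0.
- by apply: mid_le0; [rewrite !inE eqxx | exact: Rintegral_cr_shape1_ge0].
- by apply: mid_le0; [rewrite !inE eqxx orbT | exact: Rintegral_cr_shape2_ge0].
- by apply: mid_le0; [rewrite !inE eqxx !orbT | exact: Rintegral_cr_shape3_ge0].
Qed.

Lemma Rintegral_isP1_tri_eq0 T w : Defs.nondegenerate T -> isP1 w ->
  (forall m, m \in midpoints T -> w m = 0) -> Rint (tri_set T : set P) w = 0.
Proof.
move=> nd wP w0; rewrite Rintegral_isP1_tri // !w0 ?mul0r ?addr0 //;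
  by rewrite !inE eqxx ?orbT.
Qed.

End AffineIntegral.

Section CRBasis.
Variable R : realType.
Implicit Types (T : tri R) (z : pt R).

Local Notation m1 T := (midpt (tv2 T) (tv3 T)).
Local Notation m2 T := (midpt (tv3 T) (tv1 T)).
Local Notation m3 T := (midpt (tv1 T) (tv2 T)).

Lemma cr_shape_mid T : Defs.nondegenerate T ->
  [/\ cr_shape (bary1 T) (m1 T) = 1, cr_shape (bary1 T) (m2 T) = 0 & cr_shape (bary1 T) (m3 T) = 0] /\
  [/\ cr_shape (bary2 T) (m1 T) = 0, cr_shape (bary2 T) (m2 T) = 1 & cr_shape (bary2 T) (m3 T) = 0] /\
  [/\ cr_shape (bary3 T) (m1 T) = 0, cr_shape (bary3 T) (m2 T) = 0 & cr_shape (bary3 T) (m3 T) = 1].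
Proof.
rewrite /Defs.nondegenerate /cr_shape /bary1 /bary2 /bary3 /tri_det /midpt.
case: T => [[[a1 a2] [b1 b2]] [c1 c2]].
by rewrite /det2 /tv1 /tv2 /tv3 /= => nd; do ![split]; field.
Qed.

Lemma midpoints_neq T : Defs.nondegenerate T ->
  [/\ m1 T != m2 T, m2 T != m3 T & m1 T != m3 T].
Proof.
move=> /cr_shape_mid[[p11 p12 p13] [[_ p22 p23] _]].
have one0 : (0 : R) <> 1 by apply/eqP; rewrite eq_sym oner_eq0.
split; apply/eqP => E; apply: one0.
- by rewrite -p12 -E p11.
- by rewrite -p23 -E p22.
- by rewrite -p13 -E p11.
Qed.

Definition cr_basis z T (x : pt R) : R :=
  if z == m1 T then cr_shape (bary1 T) x
  else if z == m2 T then cr_shape (bary2 T) x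
  else if z == m3 T then cr_shape (bary3 T) x else 0.

Lemma isP1_cr_basis z T : isP1 (cr_basis z T).
Proof.
rewrite /cr_basis; case: (z == m1 T); first exact: isP1_cr_shape (isP1_bary1 T).
case: (z == m2 T); first exact: isP1_cr_shape (isP1_bary2 T).
case: (z == m3 T); first exact: isP1_cr_shape (isP1_bary3 T).
exact: isP1_cst.
Qed.

Lemma cr_basis_mid z T m : Defs.nondegenerate T -> m \in midpoints T ->
  cr_basis z T m = (m == z)%:R.
Proof.
move=> nd; have [[p11 p12 p13] [[p21 p22 p23] [p31 p32 p33]]] := cr_shape_mid nd.
have [n12 n23 n13] := midpoints_neq nd.
rewrite /cr_basis [m == z]eq_sym !inE => /or3P[] /eqP->.
- have [_|_] := eqVneq z (m1 T); first by rewrite p11.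
  have [_|_] := eqVneq z (m2 T); first by rewrite p21.
  by have [_|_] := eqVneq z (m3 T); first rewrite p31.
- have [E|_] := eqVneq z (m1 T); first by rewrite p12 E (negbTE n12).
  have [_|_] := eqVneq z (m2 T); first by rewrite p22.
  by have [_|_] := eqVneq z (m3 T); first rewrite p32.
- have [E|_] := eqVneq z (m1 T); first by rewrite p13 E (negbTE n13).
  have [E|_] := eqVneq z (m2 T); first by rewrite p23 E (negbTE n23).
  by have [_|_] := eqVneq z (m3 T); first rewrite p33.
Qed.

End CRBasis.

Lemma area_gt0 (R : realType) (T : tri R) : Defs.nondegenerate T -> 0 < area T.
Proof. by move=> nd; rewrite /area divr_gt0 // normr_gt0. Qed.

Section CRFunctions.
Variables (R : realType) (Om : set (pt R)) (n : nat) (Th : 'I_n -> tri R).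
Hypothesis nd : forall j, Defs.nondegenerate (Th j).

Definition cr_fun (c : R) (z : pt R) : 'I_n -> pt R -> R :=
  fun j x => c * cr_basis z (Th j) x.

Definition lumped_mass (z : pt R) : R :=
  \sum_(j < n) area (Th j) / 3 * \sum_(m <- midpoints (Th j)) (m == z)%:R.

Lemma Vnc_cr_fun c z : Om z -> Vnc Om Th (cr_fun c z).
Proof.
move=> Oz; split.
- by move=> j; apply: isP1_scale; exact: isP1_cr_basis.
- by move=> i j z' hi hj _; rewrite /cr_fun !cr_basis_mid.
- move=> i z' hi Oz'; rewrite /cr_fun cr_basis_mid //.
  by have [E|] := eqVneq z' z; [rewrite E in Oz' | rewrite mulr0].
Qed.

Lemma ncval_cr_fun c z z' : (exists j, z' \in midpoints (Th j)) ->
  ncval Th (cr_fun c z) z' = c * (z' == z)%:R.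
Proof.
move=> [j hj]; rewrite /ncval; case: pickP => [k hk|none].
  by rewrite /cr_fun cr_basis_mid.
by have := none j; rewrite hj.
Qed.

Lemma mem_Mhi_list z i : Om z -> z \in midpoints (Th i) -> z \in Mhi_list Om Th.
Proof.
move=> Oz hi; rewrite /Mhi_list mem_filter; apply/andP; split; first exact/asboolP.
by rewrite mem_undup; apply/flatten_mapP; exists i => //; exact: mem_enum.
Qed.

Lemma Mhi_list_midpoint z : z \in Mhi_list Om Th -> exists j, z \in midpoints (Th j).
Proof.
by rewrite mem_filter => /andP[_]; rewrite mem_undup => /flatten_mapP[j _ hj]; exists j.
Qed.

Lemma Pih_cr_fun (psi : pt R -> pt R -> R) c z i : Om z -> z \in midpoints (Th i) ->
  Pih Om Th psi (cr_fun c z) = fun x => c * psi z x.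
Proof.
move=> Oz hz; apply/funext => x; rewrite /Pih (big_rem z) /=; last exact: mem_Mhi_list hz.
rewrite ncval_cr_fun; last by exists i.
rewrite eqxx mulr1 big1_seq ?addr0 // => z' /andP[_ hz'].
have uniq_M : uniq (Mhi_list Om Th) by rewrite filter_uniq ?undup_uniq.
have nz : z' != z by apply: contraTneq hz' => ->; rewrite mem_rem_uniqF.
rewrite ncval_cr_fun ?(negbTE nz) ?mulr0 ?mul0r //.
by apply: Mhi_list_midpoint; exact: mem_rem hz'.
Qed.

Lemma ip_h_cr_fun (sigma : 'I_n -> pt R -> R) c z i : Vnc Om Th sigma -> Om z ->
  z \in midpoints (Th i) -> ip_h Th sigma (cr_fun c z) = c * sigma i z * lumped_mass z.
Proof.
move=> [_ sigma_cont _] Oz hz; rewrite /ip_h /lumped_mass mulr_sumr.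
apply: eq_bigr => j _.
have -> : \sum_(m <- midpoints (Th j)) sigma j m * cr_fun c z j m =
    c * sigma i z * \sum_(m <- midpoints (Th j)) (m == z)%:R.
  rewrite mulr_sumr !big_seq; apply: eq_bigr => m hm; rewrite /cr_fun cr_basis_mid //.
  have [Emz|] := eqVneq m z; last by rewrite !mulr0.
  by rewrite -Emz in hz Oz *; rewrite !mulr1 (sigma_cont j i m) // mulrC.
by rewrite mulrCA.
Qed.

Lemma lumped_mass_gt0 z i : z \in midpoints (Th i) -> 0 < lumped_mass z.
Proof.
move=> hz; rewrite /lumped_mass (bigD1 i) //=.
have count_ge0 j : 0 <= \sum_(m <- midpoints (Th j)) (m == z)%:R :> R.
  by apply: sumr_ge0 => m _; exact: ler0n.
apply: ltr_pwDl.
  apply: mulr_gt0; first by rewrite divr_gt0 ?area_gt0.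
  rewrite lt_def count_ge0 andbT psumr_neq0 => [|m _]; last exact: ler0n.
  by apply/hasP; exists z => //=; rewrite eqxx ltr0n.
apply: sumr_ge0 => j _; apply: mulr_ge0 => //.
by rewrite divr_ge0 ?ltW ?area_gt0.
Qed.

End CRFunctions.

Lemma isP2_addZ (R : realType) (p q : pt R -> R) (c : R) :
  isP2 p -> isP2 q -> isP2 (fun x => p x + c * q x).
Proof.
case=> a0 [a1 [a2 [a3 [a4 [a5 ea]]]]] [b0 [b1 [b2 [b3 [b4 [b5 eb]]]]]].
exists (a0 + c * b0), (a1 + c * b1), (a2 + c * b2), (a3 + c * b3), (a4 + c * b4), (a5 + c * b5).
by move=> x; rewrite ea eb; ring.
Qed.

Section LagrangeMultiplier.
Variables (R : realType) (Om : set (pt R)) (n : nat) (Th : 'I_n -> tri R).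
Variables (f chi uh : pt R -> R) (psi : pt R -> pt R -> R) (sigma : 'I_n -> pt R -> R).
Hypothesis nd : forall j, Defs.nondegenerate (Th j).
Hypothesis psi_nodal : forall z, node Om Th z ->
  Vh Om Th (psi z) /\ forall z', node Om Th z' -> psi z z' = (if z == z' then 1 else 0).
Hypothesis uh_Kh : Kh Om Th chi uh.
Hypothesis uh_VI : forall v, Kh Om Th chi v ->
  l2ip Om f (fun x => v x - uh x) <= a_form Om uh (fun x => v x - uh x).
Hypothesis sigma_Vnc : Vnc Om Th sigma.
Hypothesis sigmaE : forall v, Vnc Om Th v ->
  ip_h Th sigma v = l2ip Om f (Pih Om Th psi v) - a_form Om uh (Pih Om Th psi v).

Lemma Kh_add_nodal c z i : Om z -> z \in midpoints (Th i) -> chi z <= uh z + c ->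
  Kh Om Th chi (fun x => uh x + c * psi z x).
Proof.
move=> Oz hz hc; have [[cu pu ou] uh_obst] := uh_Kh.
have [[cp pp op] psi_node] := psi_nodal (or_intror (conj (ex_intro _ i hz) Oz)).
split; first split.
- by move=> x; exact: (continuousD (cu x) (continuousM (@cvg_cst _ c _ _ _) (cp x))).
- move=> j; have [p1 [P1 e1]] := pu j; have [p2 [P2 e2]] := pp j.
  by exists (fun x => p1 x + c * p2 x); split; [exact: isP2_addZ | move=> x hx; rewrite e1 ?e2].
- by move=> x Ox; rewrite ou ?op // mulr0 addr0.
move=> z' Mz'; case: (pselect (Om z')) => Oz'; last by rewrite op // mulr0 addr0; exact: uh_obst.
rewrite psi_node; last by right.
by case: eqVneq => [<-|_]; rewrite ?mulr1 ?mulr0 ?addr0 //; exact: uh_obst.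
Qed.

Lemma sigma_lumped_le0 c i m : Om m -> m \in midpoints (Th i) -> chi m <= uh m + c ->
  c * sigma i m * lumped_mass Th m <= 0.
Proof.
move=> Om_m hm hc.
rewrite -(ip_h_cr_fun nd c sigma_Vnc Om_m hm) sigmaE ?subr_le0; last exact: Vnc_cr_fun.
rewrite (Pih_cr_fun nd psi c Om_m hm).
have := uh_VI (Kh_add_nodal Om_m hm hc).
suff -> : (fun x => uh x + c * psi m x - uh x) = (fun x => c * psi m x) by [].
by apply/funext => x; rewrite addrC addKr.
Qed.

Lemma sigma_mid_le0 i m : m \in midpoints (Th i) -> sigma i m <= 0.
Proof.
move=> hm; case: (pselect (Om m)) => [Om_m|Om_m];
  last by case: sigma_Vnc => _ _ sigma0; rewrite sigma0.
have obst : chi m <= uh m by case: uh_Kh => _; apply; exists i.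
have obst1 : chi m <= uh m + 1 by rewrite ler_wpDr.
have := sigma_lumped_le0 Om_m hm obst1.
by rewrite mul1r pmulr_lle0 // (lumped_mass_gt0 nd hm).
Qed.

Lemma sigma_mid_eq0 i m : m \in midpoints (Th i) -> chi m < uh m -> sigma i m = 0.
Proof.
move=> hm hlt; case: (pselect (Om m)) => [Om_m|Om_m];
  last by case: sigma_Vnc => _ _ sigma0; rewrite sigma0.
apply/le_anti; rewrite sigma_mid_le0 //=.
have obst_eq : chi m <= uh m + (chi m - uh m) by rewrite addrC subrK.
have := sigma_lumped_le0 Om_m hm obst_eq.
by rewrite pmulr_lle0 ?(lumped_mass_gt0 nd hm) // nmulr_rle0 // subr_lt0.
Qed.

End LagrangeMultiplier.

Theorem lemma3p3 (R : realType) (Om : set (pt R)) (n : nat) (Th : 'I_n -> tri R)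
  (f chi : pt R -> R) (psi : pt R -> pt R -> R) (uh : pt R -> R)
  (sigma : 'I_n -> pt R -> R) :
  domain Om -> conforming Om Th ->
  L2 Om f ->
  {within closure Om, continuous chi} -> H1 Om chi ->
  (forall x, closure Om x -> ~ Om x -> chi x <= 0) ->
  (forall z, node Om Th z ->
     Vh Om Th (psi z) /\
     forall z', node Om Th z' -> psi z z' = (if z == z' then 1 else 0)) ->
  Kh Om Th chi uh ->
  (forall v, Kh Om Th chi v ->
     l2ip Om f (fun x => v x - uh x) <= a_form Om uh (fun x => v x - uh x)) ->
  Vnc Om Th sigma ->
  (forall v, Vnc Om Th v ->
     ip_h Th sigma v = l2ip Om f (Pih Om Th psi v) - a_form Om uh (Pih Om Th psi v)) ->
  forall i : 'I_n,
    elem_mean Th sigma i <= 0 /\ (inNh Th uh chi i -> elem_mean Th sigma i = 0).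
Proof.
move=> _ [nd _ _] _ _ _ _ psi_nodal uh_Kh uh_VI sigma_Vnc sigmaE i.
have sigma_P1 : isP1 (sigma i) by case: sigma_Vnc.
rewrite /elem_mean; split => [|Nh].
  apply: mulr_ge0_le0; first by rewrite invr_ge0 ltW ?area_gt0.
  apply: Rintegral_isP1_tri_le0 => // m hm.
  exact: (sigma_mid_le0 nd psi_nodal uh_Kh uh_VI sigma_Vnc sigmaE hm).
rewrite (Rintegral_isP1_tri_eq0 (nd i) sigma_P1) ?mulr0 // => m hm.
exact: (sigma_mid_eq0 nd psi_nodal uh_Kh uh_VI sigma_Vnc sigmaE hm (Nh m hm)).
Qed.
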